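(* Let $S_1,\dots,S_n\subseteq[N]$ and $k\ge1$. Let $\mathbb F$ be a field of characteristic $2$ with $|\mathbb F|\ge N$, and let $f:[N]\to\mathbb F$ be injective. For $a\in[N]$ set $\chi(a)=(1,f(a),f(a)^2,\dots,f(a)^{k-1})\in\mathbb F^k$. For $S\subseteq[N]$ let $\chi(S)=\bigwedge_{a\in S}\chi(a)\in\Lambda(\mathbb F^k)$, taken in increasing order of $a$, with $\chi(\emptyset)=1$. Let $y_1,\dots,y_n$ be indeterminates. Then there exists $T\subseteq[n]$ such that the sets $S_i$, $i\in T$, are pairwise disjoint and $\left|\bigcup_{i\in T}S_i\right|=k$ if and only if the coefficient of $e_{[k]}$ in $\prod_{i=1}^n(1+y_i\chi(S_i))$ is a nonzero polynomial in $\mathbb F[y_1,\dots,y_n]$.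
   Context: $\Lambda(\mathbb F^k)$ is the exterior algebra with basis $\{e_I:I\subseteq[k]\}$, where $e_I=e_{i_1}\wedge\cdots\wedge e_{i_r}$ for $I=\{i_1<\dots<i_r\}$. A vector $v\in\mathbb F^k$ is identified with $\sum_iv[i]e_i$. The product is taken in $\Lambda(\mathbb F^k)$ with coefficients in the polynomial ring $\mathbb F[y_1,\dots,y_n]$; in characteristic $2$ this algebra is commutative. For an element $x$, $[e_{[k]}]x$ denotes its coefficient on $e_{[k]}=e_1\wedge\cdots\wedge e_k$. *)

From HB Require Import structures.
From mathcomp Require Import all_boot all_order all_algebra.
From mathcomp Require Import mpoly.
Set Implicit Arguments. Unset Strict Implicit. Unset Printing Implicit Defensive.
Import Order.TTheory GRing.Theory.
Local Open Scope ring_scope.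

(* Exterior algebra Lambda(R^k) over a commutative ring R, represented by its
   coordinates on the basis e_I, I ranging over subsets of 'I_k
   (0-based indices: e_I = e_{i_1} /\ ... /\ e_{i_r}, i_1 < ... < i_r). *)
Definition ext (R : comRingType) (k : nat) := {ffun {set 'I_k} -> R}.

(* sign of e_I /\ e_J = sign * e_(I u J) for disjoint I, J: (-1)^(#inversions) *)
Definition ext_sign (R : comRingType) (k : nat) (I J : {set 'I_k}) : R :=
  (-1) ^+ #|[set p : 'I_k * 'I_k | [&& p.1 \in I, p.2 \in J & (p.2 < p.1)%N]]|.

Definition ext_mul (R : comRingType) (k : nat) (x y : ext R k) : ext R k :=
  [ffun K : {set 'I_k} =>
     \sum_(I : {set 'I_k}) \sum_(J : {set 'I_k} | [disjoint I & J] && (I :|: J == K))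
        ext_sign R I J * x I * y J].

Definition ext_one (R : comRingType) (k : nat) : ext R k :=
  [ffun I : {set 'I_k} => (I == set0)%:R].

(* a vector v in R^k identified with sum_i v[i] e_i *)
Definition ext_vec (R : comRingType) (k : nat) (v : 'I_k -> R) : ext R k :=
  [ffun I : {set 'I_k} => \sum_(i : 'I_k | I == [set i]) v i].

Definition ext_scale (R : comRingType) (k : nat) (c : R) (x : ext R k) : ext R k :=
  [ffun I => c * x I].

Definition chi_vec (F : fieldType) (N n k : nat) (f : 'I_N -> F) (a : 'I_N)
  : ext {mpoly F[n]} k :=
  ext_vec (fun j : 'I_k => ((f a) ^+ j)%:MP).

Definition chi_set (F : fieldType) (N n k : nat) (f : 'I_N -> F) (S : {set 'I_N})
  : ext {mpoly F[n]} k :=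
  foldr (fun a acc => ext_mul (chi_vec n k f a) acc) (ext_one _ k) (enum S).

Definition gen_prod (F : fieldType) (N n k : nat) (f : 'I_N -> F)
  (S : 'I_n -> {set 'I_N}) : ext {mpoly F[n]} k :=
  foldr (fun i acc => ext_mul (ext_one _ k + ext_scale 'X_i (chi_set n k f (S i))) acc)
        (ext_one _ k) (enum 'I_n).

From HB Require Import structures.
From mathcomp Require Import all_boot all_order all_algebra.
From mathcomp Require Import mpoly.
From mathcomp Require Import fingroup perm.
Set Implicit Arguments. Unset Strict Implicit. Unset Printing Implicit Defensive.
Import GRing.Theory.
Local Open Scope ring_scope.

(* In characteristic 2 the exterior algebra is commutative: it is the algebra
   of subsets of [k] with e_I e_J = e_(I u J) when I and J are disjoint and 0
   otherwise.  Expanding prod_i (1 + y_i chi(S_i)) there gives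
   sum_T y^T prod_(i in T) chi(S_i), and the square-free monomials y^T are
   distinct, so the top coefficient is nonzero iff the top coefficient of some
   prod_(i in T) chi(S_i) is.  As chi(a)^2 = 0, such a product vanishes unless
   the S_i, i in T, are pairwise disjoint, and then it is the product of the
   chi(a), a in the union U.  That product is homogeneous of degree |U|, and
   when |U| = k its top coefficient is a Vandermonde determinant, nonzero since
   f is injective. *)

Lemma disjoint_setU_eqE (T : finType) (A J K : {set T}) :
  [disjoint A & J] && (A :|: J == K) = (A \subset K) && (J == K :\: A).
Proof.
apply/andP/andP => [[dAJ /eqP <-]|[sAK /eqP ->]].
  split; first exact: subsetUl.
  by rewrite setDUl setDv set0U eq_sym; apply/eqP/setDidPl; rewrite disjoint_sym.
split; first by rewrite disjoint_sym; apply/setDidPl; rewrite setDDl setUid.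
by rewrite -{2}(setID K A) (setIidPr sAK).
Qed.

Lemma disjoint_setUl (T : finType) (A B C : {set T}) :
  [disjoint A :|: B & C] = [disjoint A & C] && [disjoint B & C].
Proof. by rewrite -!setI_eq0 setIUl setU_eq0. Qed.

Lemma disjoint_setUr (T : finType) (A B C : {set T}) :
  [disjoint A & B :|: C] = [disjoint A & B] && [disjoint A & C].
Proof. by rewrite !(disjoint_sym A) disjoint_setUl. Qed.

(* The exterior algebra with its signs dropped: a commutative ring over any R,
   whose product agrees with ext_mul when 2 = 0 in R (ext_mulE). *)
Definition setalg (R : comNzRingType) (k : nat) : Type := {ffun {set 'I_k} -> R}.
HB.instance Definition _ R k := GRing.Zmodule.copy (setalg R k) {ffun {set 'I_k} -> R}.

Section SetAlgebra.
Variables (R : comNzRingType) (k : nat).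
Implicit Types (x y z : setalg R k) (A B C I J K : {set 'I_k}).

Definition setalg_mul x y : setalg R k :=
  [ffun K : {set 'I_k} => \sum_(I : {set 'I_k})
     \sum_(J : {set 'I_k} | [disjoint I & J] && (I :|: J == K)) x I * y J].

Definition emon A (r : R) : setalg R k := [ffun I => r *+ (I == A)].

Lemma setalg_mulE x y K : setalg_mul x y K =
  \sum_(I : {set 'I_k}) \sum_(J : {set 'I_k})
    (if [disjoint I & J] && (I :|: J == K) then x I * y J else 0).
Proof. by rewrite ffunE; apply: eq_bigr => I _; rewrite big_mkcond. Qed.

Lemma setalg_expand x : x = \sum_(A : {set 'I_k}) emon A (x A).
Proof.
apply/ffunP => K; rewrite sum_ffunE (bigD1 K) //= ffunE eqxx mulr1n big1 ?addr0 //.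
by move=> A /negPf nKA; rewrite ffunE eq_sym nKA.
Qed.

Lemma setalg_mul_emonl A r x K :
  setalg_mul (emon A r) x K = if A \subset K then r * x (K :\: A) else 0.
Proof.
rewrite setalg_mulE (bigD1 A) //= [X in _ + X]big1 ?addr0 => [|I /negPf nIA];
  last first.
  by apply: big1 => J _; rewrite ffunE nIA mulr0n mul0r; case: ifP.
under eq_bigr do rewrite disjoint_setU_eqE ffunE eqxx mulr1n.
case: (A \subset K) => /=; last by rewrite big1.
by rewrite -big_mkcond big_pred1_eq.
Qed.

Lemma setalg_mulC : commutative setalg_mul.
Proof.
move=> x y; apply/ffunP => K; rewrite !setalg_mulE exchange_big.
apply: eq_bigr => I _; apply: eq_bigr => J _.
by rewrite disjoint_sym setUC mulrC.
Qed.

Lemma setalg_mul1 : left_id (emon set0 1) setalg_mul.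
Proof. by move=> x; apply/ffunP => K; rewrite setalg_mul_emonl sub0set setD0 mul1r. Qed.

Lemma setalg_mulDl : left_distributive setalg_mul +%R.
Proof.
move=> x y z; apply/ffunP => K; rewrite [RHS]ffunE !setalg_mulE -big_split /=.
apply: eq_bigr => I _; rewrite -big_split; apply: eq_bigr => J _ /=.
by rewrite ffunE mulrDl; case: ifP; rewrite ?addr0.
Qed.

Lemma setalg_mul0 x : setalg_mul 0 x = 0.
Proof.
apply/ffunP => K; rewrite setalg_mulE ffunE big1 // => I _.
by apply: big1 => J _; rewrite ffunE mul0r if_same.
Qed.

Lemma setalg_mul_suml (T : finType) (F : T -> setalg R k) y :
  setalg_mul (\sum_t F t) y = \sum_t setalg_mul (F t) y.
Proof.
exact: (big_morph (setalg_mul^~ y) (fun a b => setalg_mulDl a b y) (setalg_mul0 y)).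
Qed.

Lemma setalg_mul_sumr (T : finType) (F : T -> setalg R k) x :
  setalg_mul x (\sum_t F t) = \sum_t setalg_mul x (F t).
Proof.
by rewrite setalg_mulC setalg_mul_suml; apply: eq_bigr => t _; rewrite setalg_mulC.
Qed.

Lemma setalg_mul_emon A B r s :
  setalg_mul (emon A r) (emon B s) =
  if [disjoint A & B] then emon (A :|: B) (r * s) else 0.
Proof.
apply/ffunP => K; have := disjoint_setU_eqE A B K.
rewrite setalg_mul_emonl ffunE mulrnAr [K :\: A == B]eq_sym.
case: [disjoint A & B]; case: (A \subset K) => /= h; rewrite !ffunE //.
- by rewrite -h eq_sym.
- by rewrite eq_sym h.
- by rewrite -h.
Qed.

Lemma setalg_mul0r x : setalg_mul x 0 = 0.
Proof. by rewrite setalg_mulC setalg_mul0. Qed.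

Lemma emon_mulA A B C r s t :
  setalg_mul (emon A r) (setalg_mul (emon B s) (emon C t)) =
  setalg_mul (setalg_mul (emon A r) (emon B s)) (emon C t).
Proof.
rewrite [setalg_mul (emon B s) _]setalg_mul_emon.
rewrite [setalg_mul _ (emon B s)]setalg_mul_emon.
case dBC: [disjoint B & C]; case dAB: [disjoint A & B];
  rewrite ?setalg_mul0 ?setalg_mul0r ?setalg_mul_emon
          ?disjoint_setUl ?disjoint_setUr ?dAB ?dBC ?andbF //.
by rewrite andbT setUA mulrA.
Qed.

Lemma setalg_mulA : associative setalg_mul.
Proof.
move=> x y z; rewrite [x]setalg_expand [y]setalg_expand [z]setalg_expand.
transitivity (\sum_(A : {set 'I_k}) \sum_(B : {set 'I_k}) \sum_(C : {set 'I_k})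
  setalg_mul (emon A (x A)) (setalg_mul (emon B (y B)) (emon C (z C)))).
  rewrite setalg_mul_suml; apply: eq_bigr => A _.
  rewrite setalg_mul_suml setalg_mul_sumr; apply: eq_bigr => B _.
  by rewrite !setalg_mul_sumr.
rewrite setalg_mul_suml [in RHS]setalg_mul_suml; apply: eq_bigr => A _.
rewrite [setalg_mul (emon A _) _]setalg_mul_sumr setalg_mul_suml.
apply: eq_bigr => B _.
by rewrite setalg_mul_sumr; apply: eq_bigr => C _; rewrite emon_mulA.
Qed.

Lemma setalg_one_neq0 : emon set0 (1 : R) != 0.
Proof. by apply/eqP => /ffunP /(_ set0); rewrite !ffunE eqxx; apply/eqP/oner_neq0. Qed.

End SetAlgebra.

HB.instance Definition _ R k := GRing.Zmodule_isComNzRing.Build (setalg R k)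
  (@setalg_mulA R k) (@setalg_mulC R k) (@setalg_mul1 R k) (@setalg_mulDl R k)
  (@setalg_one_neq0 R k).

Section SetAlgebraTheory.
Variables (R : comNzRingType) (k : nat).
Implicit Types (x y : setalg R k) (A B I : {set 'I_k}) (r s : R).

Lemma mul_emonE A r x I : (emon A r * x) I = if A \subset I then r * x (I :\: A) else 0.
Proof. exact: setalg_mul_emonl. Qed.

Lemma emonM A B r s :
  emon A r * emon B s = if [disjoint A & B] then emon (A :|: B) (r * s) else 0.
Proof. exact: setalg_mul_emon. Qed.

Definition setalgC (r : R) : setalg R k := emon set0 r.

Lemma setalgC_is_zmod_morphism : zmod_morphism setalgC.
Proof. by move=> a b; apply/ffunP => I; rewrite !ffunE mulrnBl. Qed.

HB.instance Definition _ := GRing.isZmodMorphism.Build R (setalg R k) setalgC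
  setalgC_is_zmod_morphism.

Lemma setalgC_is_monoid_morphism : monoid_morphism setalgC.
Proof. by split=> // a b; rewrite /setalgC emonM -setI_eq0 setI0 eqxx setU0. Qed.

HB.instance Definition _ := GRing.isMonoidMorphism.Build R (setalg R k) setalgC
  setalgC_is_monoid_morphism.

Lemma mul_setalgCE r x I : (setalgC r * x) I = r * x I.
Proof. by rewrite mul_emonE sub0set setD0. Qed.

Lemma ext_vecE (v : 'I_k -> R) : ext_vec v = \sum_j emon [set j] (v j) :> setalg R k.
Proof.
apply/ffunP => I; rewrite sum_ffunE ffunE big_mkcond /=.
by apply: eq_bigr => j _; rewrite ffunE; case: (_ == _).
Qed.

Lemma prod_emon1 (T : Type) (s : seq T) (g : T -> 'I_k) (a : T -> R) :
  \prod_(t <- s) emon [set g t] (a t) =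
  if uniq (map g s) then emon [set:: map g s] (\prod_(t <- s) a t) else 0.
Proof.
elim: s => [|t s IH]; first by rewrite !big_nil.
rewrite !big_cons IH /= set_cons; case: (uniq (map g s)); last by rewrite mulr0 andbF.
by rewrite emonM disjoints1 inE andbT; case: (_ \in _).
Qed.

Section Char2.
Hypothesis pcharR2 : (2 \in [pchar R])%N.

Lemma ext_mulE x y : ext_mul x y = x * y.
Proof.
apply/ffunP => K; rewrite ffunE setalg_mulE; apply: eq_bigr => I _.
rewrite big_mkcond; apply: eq_bigr => J _.
by rewrite /ext_sign oppr_pchar2 // expr1n mul1r.
Qed.

Lemma ext_vec_sqr (v : 'I_k -> R) : (ext_vec v : setalg R k) * ext_vec v = 0.
Proof.
have pchar2 : (2 \in [pchar setalg R k])%N := rmorph_pchar setalgC pcharR2.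
rewrite -expr2 ext_vecE -(pFrobenius_autE pchar2) rmorph_sum big1 // => j _.
by rewrite /= pFrobenius_autE expr2 emonM disjoints1 set11.
Qed.

Lemma det_ext_vec (v : 'I_k -> 'I_k -> R) :
  (\prod_t (ext_vec (v t) : setalg R k)) setT = \det (\matrix_(t, j) v t j).
Proof.
under eq_bigr do rewrite ext_vecE.
rewrite bigA_distr_bigA /= sum_ffunE.
have enumE : index_enum 'I_k = enum 'I_k by rewrite [index_enum _]unlock enumT.
under eq_bigr do rewrite prod_emon1 [in uniq _]enumE.
rewrite (bigID (fun g : {ffun 'I_k -> 'I_k} => injectiveb g)) /=.
rewrite [X in _ + X]big1 ?addr0 => [|g /negPf ng]; last by rewrite [uniq _]ng ffunE.
rewrite (reindex (@pval _)) /=; last first.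
  by exists (insubd (1%g : 'S_k)) => /= g inj_g; first apply: val_inj; apply: insubdK.
rewrite /determinant; apply: eq_big => [s | s _]; first by rewrite (valP s).
have onto_s : [set:: [seq pval s t | t <- index_enum 'I_k]] = setT.
  apply/setP => j; rewrite !inE pvalE; apply/mapP.
  by exists (s^-1 j)%g; rewrite ?permKV.
rewrite [uniq _](valP s) onto_s ffunE eqxx mulr1n oppr_pchar2 // expr1n mul1r.
by apply: eq_bigr => t _; rewrite mxE pvalE.
Qed.
End Char2.

Definition homogeneous x m := forall I, x I != 0 -> #|I| = m.

Lemma homogeneousM x y a b :
  homogeneous x a -> homogeneous y b -> homogeneous (x * y) (a + b).
Proof.
move=> hx hy K; rewrite setalg_mulE => nz.
apply/eqP; apply: contraR nz => ne; apply/eqP; apply: big1 => I _; apply: big1 => J _.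
case: ifP => // /andP [dIJ /eqP UIJ].
have [/eqP xI | /hx cI] := boolP (x I == 0); first by rewrite xI mul0r.
have [/eqP yJ | /hy cJ] := boolP (y J == 0); first by rewrite yJ mulr0.
by case/eqP: ne; rewrite -UIJ cardsU (disjoint_setI0 dIJ) cards0 subn0 cI cJ.
Qed.

Lemma homogeneous_emon A r : homogeneous (emon A r) #|A|.
Proof. by move=> I; rewrite ffunE; case: (I =P A) => [->|] //; rewrite mulr0n eqxx. Qed.

Lemma homogeneous1 : homogeneous 1 0.
Proof. by rewrite -(cards0 'I_k); apply: homogeneous_emon. Qed.

Lemma homogeneous_ext_vec (v : 'I_k -> R) : homogeneous (ext_vec v) 1.
Proof.
move=> I; rewrite ffunE; case: (pickP (fun j => I == [set j])) => [j /eqP -> _|none].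
  exact: cards1.
by rewrite big_pred0 ?eqxx.
Qed.

Lemma homogeneous_prod (J : Type) (r : seq J) (P : pred J) (F : J -> setalg R k)
    (m : J -> nat) :
  (forall i, P i -> homogeneous (F i) (m i)) ->
  homogeneous (\prod_(i <- r | P i) F i) (\sum_(i <- r | P i) m i)%N.
Proof.
move=> hF; apply: (big_rec2 (fun x a => homogeneous x a)); first exact: homogeneous1.
by move=> i x a Pi; apply: homogeneousM; apply: hF.
Qed.

End SetAlgebraTheory.

Section MapSetAlgebra.
Variables (R1 R2 : comNzRingType) (k : nat) (phi : {rmorphism R1 -> R2}).

Definition map_setalg (x : setalg R1 k) : setalg R2 k := [ffun I => phi (x I)].

Lemma map_setalg_is_zmod_morphism : zmod_morphism map_setalg.
Proof. by move=> x y; apply/ffunP => I; rewrite !ffunE rmorphB. Qed.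

HB.instance Definition _ := GRing.isZmodMorphism.Build (setalg R1 k) (setalg R2 k)
  map_setalg map_setalg_is_zmod_morphism.

Lemma map_setalg_is_monoid_morphism : monoid_morphism map_setalg.
Proof.
split=> [|x y]; first by apply/ffunP => I; rewrite !ffunE rmorph_nat.
apply/ffunP => K; rewrite ffunE !setalg_mulE rmorph_sum; apply: eq_bigr => I _.
rewrite rmorph_sum; apply: eq_bigr => J _.
by case: ifP; rewrite ?rmorph0 // rmorphM !ffunE.
Qed.

HB.instance Definition _ := GRing.isMonoidMorphism.Build (setalg R1 k) (setalg R2 k)
  map_setalg map_setalg_is_monoid_morphism.

Lemma map_ext_vec (v : 'I_k -> R1) :
  map_setalg (ext_vec v) = ext_vec (fun j => phi (v j)).
Proof. by apply/ffunP => I; rewrite !ffunE rmorph_sum. Qed.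

End MapSetAlgebra.

Section PowerVectors.
Variables (R : idomainType) (k : nat).
Hypothesis pcharR2 : (2 \in [pchar R])%N.

Definition powvec (x : R) : setalg R k := ext_vec (fun j : 'I_k => x ^+ j).

Lemma prod_powvec_top_neq0 (c : 'I_k -> R) : injective c ->
  (\prod_t powvec (c t)) setT != 0.
Proof.
move=> inj_c; rewrite det_ext_vec // -det_tr.
have -> : (\matrix_(t, j) c t ^+ j)^T = Vandermonde k (\row_t c t).
  by apply/matrixP => i j; rewrite !mxE.
rewrite det_Vandermonde; apply/prodf_neq0 => i _; apply/prodf_neq0 => j lt_ij.
by rewrite !mxE subr_eq0; apply: contraTneq lt_ij => /inj_c ->; rewrite ltnn.
Qed.

Lemma prod_powvec_topP (T : finType) (f : T -> R) (A : {set T}) : injective f ->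
  ((\prod_(a in A) powvec (f a)) setT != 0) = (#|A| == k).
Proof.
move=> inj_f; apply/idP/eqP => [nz | cardA].
  have homA : homogeneous (\prod_(a in A) powvec (f a)) #|A|.
    by rewrite -sum1_card; apply: homogeneous_prod => a _; apply: homogeneous_ext_vec.
  by rewrite -(homA _ nz) cardsT card_ord.
rewrite big_enum_val /= (reindex (cast_ord (esym cardA))) /=; last first.
  by exists (cast_ord cardA) => t _; rewrite ?cast_ordK ?cast_ordKV.
by apply: prod_powvec_top_neq0 => t1 t2 /inj_f /enum_val_inj /cast_ord_inj.
Qed.
End PowerVectors.

Section DisjointFamilies.
Variables (R : idomainType) (N n k : nat) (f : 'I_N -> R) (S : 'I_n -> {set 'I_N}).
Hypothesis pcharR2 : (2 \in [pchar R])%N.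
Hypothesis inj_f : injective f.
Implicit Types (T : {set 'I_n}).

Definition pairwise_disjoint (T : {set 'I_n}) :=
  forall i j, i \in T -> j \in T -> i != j -> [disjoint S i & S j].

Definition family_prod (T : {set 'I_n}) : setalg R k :=
  \prod_(i in T) \prod_(a in S i) powvec k (f a).

Lemma family_prod_eq0 T i j a : i \in T -> j \in T -> i != j ->
  a \in S i -> a \in S j -> family_prod T = 0.
Proof.
move=> iT jT neq_ij aSi aSj; rewrite /family_prod (bigD1 i) //= (bigD1 j) /=; last first.
  by rewrite jT eq_sym.
rewrite (bigD1 a aSi) (bigD1 a aSj) /= mulrA [X in X * _]mulrACA ext_vec_sqr //.
by rewrite !mul0r.
Qed.

Lemma family_prod_disjoint T : pairwise_disjoint T ->
  family_prod T = \prod_(a in \bigcup_(i in T) S i) powvec k (f a).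
Proof.
move=> disjT; pose F i := if i \in T then S i else set0.
have -> : \bigcup_(i in T) S i = \bigcup_i F i by rewrite big_mkcond.
rewrite partition_disjoint_bigcup => [|i j neq_ij]; last first.
  rewrite -setI_eq0 /F; case: ifP => iT; case: ifP => jT;
    by rewrite ?setI0 ?set0I // setI_eq0 disjT.
rewrite /family_prod big_mkcond; apply: eq_bigr => i _.
by rewrite /F; case: ifP => // _; rewrite big_set0.
Qed.

Lemma family_prod_topP T : family_prod T setT != 0 <->
  pairwise_disjoint T /\ #|\bigcup_(i in T) S i| = k.
Proof.
split=> [nz | [disjT cardT]]; last first.
  by rewrite family_prod_disjoint // (prod_powvec_topP _ pcharR2 _ inj_f) cardT.
have disjT : pairwise_disjoint T.
  move=> i j iT jT neq_ij; rewrite -setI_eq0; apply/set0Pn => -[a].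
  rewrite inE => /andP [aSi aSj].
  by move: nz; rewrite (family_prod_eq0 iT jT neq_ij aSi aSj) ffunE eqxx.
split=> //; apply/eqP.
by rewrite -(prod_powvec_topP _ pcharR2 _ inj_f) -family_prod_disjoint.
Qed.

End DisjointFamilies.

Lemma prod1D_subsets (R : comNzRingType) (I : finType) (A : I -> R) :
  \prod_i (1 + A i) = \sum_(T : {set I}) \prod_(i in T) A i.
Proof.
rewrite (eq_bigr (fun i => \sum_(b : bool) if b then A i else 1)); last first.
  by move=> i _; rewrite big_bool addrC.
rewrite bigA_distr_bigA (reindex (fun T : {set I} => [ffun i => i \in T])) /=.
  by apply: eq_bigr => T _; rewrite [RHS]big_mkcond; apply: eq_bigr => i _; rewrite ffunE.
exists (fun g : {ffun I -> bool} => [set i | g i]) => [T _ | g _].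
  by apply/setP => i; rewrite inE ffunE.
by apply/ffunP => i; rewrite ffunE inE.
Qed.

Section MultilinearMonomials.
Variables (R : comNzRingType) (n : nat).

Lemma prod_mpolyX_set (T : {set 'I_n}) :
  \prod_(i in T) 'X_i = 'X_[mesym1 T] :> {mpoly R[n]}.
Proof.
rewrite mprodXE; congr 'X_[_]; apply/mnmP => i; rewrite mnmE mnm_sumE big_mkcond /=.
rewrite (bigD1 i) //= mnmE eqxx /= big1 ?addn0 => [|j neq_ji]; first by case: (_ \in _).
by case: (_ \in _); rewrite // mnmE (negbTE neq_ji).
Qed.

Lemma sum_mesym1_neq0 (c : {set 'I_n} -> R) :
  (\sum_(T : {set 'I_n}) 'X_[mesym1 T] * (c T)%:MP != 0) = [exists T, c T != 0].
Proof.
apply/idP/existsP => [nz | [T cT]].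
  apply/existsP; apply: contraNT nz => /existsPn c0.
  by rewrite big1 // => T _; rewrite (eqP (negbNE (c0 T))) mpolyC0 mulr0.
apply: contraNneq cT => /(congr1 (mcoeff (mesym1 T))).
rewrite raddf_sum mcoeff0 (bigD1 T) //= [X in _ + X]big1 ?addr0 => [|T' neq_T'T].
  by rewrite mulrC mcoeffCM mcoeffX eqxx mulr1 => ->.
by rewrite mulrC mcoeffCM mcoeffX (inj_eq (@inj_mesym1 n)) (negbTE neq_T'T) mulr0.
Qed.

End MultilinearMonomials.

Section GeneratingProduct.
Variables (F : fieldType) (N n k : nat) (f : 'I_N -> F) (S : 'I_n -> {set 'I_N}).
Hypothesis pcharF2 : (2 \in [pchar F])%N.

Let pchar_mpoly2 : (2 \in [pchar {mpoly F[n]}])%N := rmorph_pchar (@mpolyC n F) pcharF2.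

Lemma chi_setE A :
  chi_set n k f A = map_setalg (@mpolyC n F) (\prod_(a in A) powvec k (f a)).
Proof.
rewrite /chi_set -big_enum /=; elim: (enum A) => [|a s IH] /=.
  by rewrite big_nil rmorph1.
by rewrite IH ext_mulE // big_cons rmorphM /= [powvec _ (f a)]/powvec map_ext_vec.
Qed.

Lemma gen_prodE : (gen_prod k f S : setalg _ k) =
  \prod_i (1 + setalgC k 'X_i * chi_set n k f (S i)).
Proof.
rewrite /gen_prod -big_enum /=; elim: (enum 'I_n) => [|i s IH] /=.
  by rewrite big_nil.
rewrite big_cons IH ext_mulE //; congr ((_ + _) * _).
by apply/ffunP => I; rewrite mul_setalgCE ffunE.
Qed.

Lemma gen_prod_top : gen_prod k f S setT =
  \sum_(T : {set 'I_n}) 'X_[mesym1 T] * (family_prod k f S T setT)%:MP.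
Proof.
rewrite gen_prodE prod1D_subsets sum_ffunE; apply: eq_bigr => T _.
under eq_bigr do rewrite chi_setE.
by rewrite big_split /= -!rmorph_prod mul_setalgCE prod_mpolyX_set ffunE.
Qed.

End GeneratingProduct.

Theorem mainTheorem11 (F : fieldType) (N n k : nat)
  (S : 'I_n -> {set 'I_N}) (f : 'I_N -> F) :
  (0 < k)%N -> 2%N \in [pchar F] -> injective f ->
  ((exists T : {set 'I_n},
      (forall i j, i \in T -> j \in T -> i != j -> [disjoint S i & S j]) /\
      #|\bigcup_(i in T) S i| = k)
   <-> @gen_prod F N n k f S setT != 0).
Proof.
move=> _ pcharF2 inj_f; rewrite gen_prod_top // sum_mesym1_neq0.
split=> [[T famT] | /existsP [T]].
  by apply/existsP; exists T; apply/(family_prod_topP _ _ pcharF2 inj_f).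
by move/(family_prod_topP _ _ pcharF2 inj_f) => famT; exists T.
Qed.
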